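(* Let $G$ be a two-legged one-particle-irreducible graph with two distinct external vertices $v_1$ and $v_2$, and suppose every vertex of $G$ has even incidence number. Let $T$ be any spanning tree of $G$, and let $\theta$ be the linear subtree of $T$ consisting of the unique path from $v_1$ to $v_2$ along lines of $T$. Then for every line $\ell\in\theta$ there are two distinct lines $\ell_1,\ell_2$ of $G$, not in $T$, such that $\ell$ lies on the loop generated by $\ell_1$ and on the loop generated by $\ell_2$ (so these two loops overlap on $\ell$), and for each $i\in\{1,2\}$ the graph $T_i$ obtained from $T$ by removing $\ell$ and adding $\ell_i$ is a spanning tree of $G$.
   Context: A graph here consists of vertices, internal lines (edges joining two vertices; multiple lines between the same pair of vertices and lines from a vertex to itself are allowed) and external legs (half-lines attached to a single vertex). It is two-legged if it has exactly two external legs; the vertices to which the external legs are attached are called external vertices. The incidence number of a vertex is the number of line ends (internal line ends and external legs) at that vertex. A graph is one-particle-irreducible (1PI) if it is connected and remains connected after cutting any single internal line. A spanning tree is a subgraph consisting of internal lines that is a tree containing all vertices. For a spanning tree $T$ and an internal line $\ell'\notin T$, the loop generated by $\ell'$ is the unique cycle in $T\cup\{\ell'\}$, i.e. $\ell'$ together with the path in $T$ joining its endpoints. *)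

(* A graph: finite vertex type V, finite type L of internal
   lines, each line l joining the (unordered) endpoints src l and tgt l
   (multiple lines and self-loops allowed). The two external legs are
   attached at vertices v1 and v2. *)
From mathcomp Require Import all_boot.
Set Implicit Arguments. Unset Strict Implicit. Unset Printing Implicit Defensive.

Section Graphs.
Variables (V L : finType) (src tgt : L -> V).

Definition joins (l : L) (a b : V) : bool :=
  ((src l == a) && (tgt l == b)) || ((src l == b) && (tgt l == a)).

Definition adj (S : {set L}) : rel V :=
  fun a b => [exists l in S, joins l a b].

Definition connected_by (S : {set L}) : Prop :=
  forall a b : V, connect (adj S) a b.

(* incidence number of v: number of line ends at v (a self-loop counts twice)
   plus the number of external legs at v *)
Definition incidence (v1 v2 : V) (v : V) : nat :=
  #|[set l | src l == v]| + #|[set l | tgt l == v]| + (v == v1) + (v == v2).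

Definition one_PI : Prop :=
  connected_by setT /\ forall l : L, connected_by (setT :\ l).

(* ls is a cycle with lines in S: a nonempty closed walk through pairwise
   distinct lines and pairwise distinct vertices vs, the i-th line joining
   vs_i and vs_(i+1 mod n) (the defaults dl, dv of nth are irrelevant) *)
Definition is_cycle (S : {set L}) (ls : seq L) : Prop :=
  exists vs : seq V,
    [/\ ls != [::], size vs = size ls, uniq ls && uniq vs,
        all (fun l => l \in S) ls &
        forall (i : nat) (dl : L) (dv : V), i < size ls ->
          joins (nth dl ls i) (nth dv vs i) (nth dv vs ((i.+1) %% size ls))].

Definition acyclic (S : {set L}) : Prop := forall ls, ~ is_cycle S ls.

Definition spanning_tree (T : {set L}) : Prop := connected_by T /\ acyclic T.

Definition is_path (S : {set L}) (a b : V) (ls : seq L) : Prop :=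
  exists vs : seq V,
    [/\ size vs = (size ls).+1, head a vs = a /\ last a vs = b, uniq vs,
        all (fun l => l \in S) ls &
        forall (i : nat) (dl : L), i < size ls ->
          joins (nth dl ls i) (nth a vs i) (nth a vs i.+1)].

Definition on_loop (T : {set L}) (l' l : L) : Prop :=
  exists ls, [/\ is_cycle (T :|: [set l']) ls, l' \in ls & l \in ls].

End Graphs.

From Pilot Require Import Defs.
From mathcomp Require Import all_boot zify.
Set Implicit Arguments. Unset Strict Implicit. Unset Printing Implicit Defensive.

(* Removing l from T splits the vertices into the side of v1 (the component
   of T - l containing the endpoint of l nearer to v1) and the side of v2.
   Summing the even incidence numbers over the side of v1 counts each line
   inside it twice, each line crossing the cut once and the external leg at v1
   once, so the cut C is odd.  It contains l and, by 1PI, another line, hence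
   at least two lines l1, l2 besides l.  A line of C other than l is not in T;
   the cycle it closes in T must cross the cut again, necessarily through l;
   and exchanging it for l reconnects both sides without creating a cycle,
   because a cycle never crosses a cut exactly once. *)


Lemma cyclic_step_eq (A : Type) (g : nat -> A) n k : k < n ->
  (forall i, i < n -> i != k -> g i = g (i.+1 %% n)) -> g k = g (k.+1 %% n).
Proof.
move=> kn step.
have rot j : j < n -> g ((k.+1 + j) %% n) = g (k.+1 %% n).
  elim: j => [|j IH] jn; first by rewrite addn0.
  have -> : (k.+1 + j.+1) %% n = ((k.+1 + j) %% n).+1 %% n.
    by rewrite -[((k.+1 + j) %% n).+1]addn1 modnDml addn1 addnS.
  rewrite -IH 1?ltnW //; symmetry; apply: step; first by rewrite ltn_mod; lia.
  case: (ltnP (k.+1 + j) n) => [small | big]; first by rewrite modn_small //; lia.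
  have -> : k.+1 + j = (k.+1 + j - n) + n by lia.
  by rewrite modnDr modn_small; lia.
have := rot n.-1 ltac:(lia).
have -> : k.+1 + n.-1 = k + n by lia.
by rewrite modnDr modn_small.
Qed.

Lemma connect_nth (T : finType) (e : rel T) (vs : seq T) x i j : i <= j ->
  (forall h, i <= h < j -> e (nth x vs h) (nth x vs h.+1)) ->
  connect e (nth x vs i) (nth x vs j).
Proof.
elim: j => [|j IH]; first by rewrite leqn0 => /eqP ->.
rewrite leq_eqVlt => /orP[/eqP -> _ //|ij] steps.
apply: connect_trans (IH ij _) (connect1 (steps j _)) => [h /andP[ih hj]|]; last lia.
by apply: steps; lia.
Qed.

Section Graph.
Variables (V L : finType) (src tgt : L -> V).
Local Notation joins := (joins src tgt).
Local Notation adj := (adj src tgt).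
Local Notation is_cycle := (is_cycle src tgt).
Local Notation is_path := (is_path src tgt).
Local Notation spanning_tree := (spanning_tree src tgt).
Local Notation on_loop := (on_loop src tgt).

Definition crosses (c : pred V) (m : L) : bool := c (src m) != c (tgt m).

Lemma joins_ends m : joins m (src m) (tgt m).
Proof. by rewrite /Defs.joins !eqxx. Qed.

Lemma joins_sym m u w : joins m u w = joins m w u.
Proof. by rewrite /Defs.joins orbC. Qed.

Lemma joins_crosses (c : pred V) m u w : joins m u w -> crosses c m = (c u != c w).
Proof. by rewrite /crosses => /orP[]/andP[/eqP<- /eqP<-] //; rewrite eq_sym. Qed.

Lemma adj_joins (S : {set L}) m u w : m \in S -> joins m u w -> adj S u w.
Proof. by move=> mS j; apply/existsP; exists m; rewrite mS j. Qed.

Lemma adj_sym (S : {set L}) : symmetric (adj S).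
Proof.
by move=> u w; apply/existsP/existsP => -[m /andP[mS j]]; exists m; rewrite mS joins_sym.
Qed.

Lemma connect_adj_sym (S : {set L}) : connect_sym (adj S).
Proof. exact/sym_connect_sym/adj_sym. Qed.

Lemma connect_adjS (S S' : {set L}) u w :
  S \subset S' -> connect (adj S) u w -> connect (adj S') u w.
Proof.
move=> /subsetP sub; apply: connect_sub => x y /existsP[m /andP[mS j]].
exact/connect1/(adj_joins (sub _ mS)).
Qed.

Lemma connect_crosses (S : {set L}) (c : pred V) x y :
  connect (adj S) x y -> c x -> ~~ c y -> exists2 m, m \in S & crosses c m.
Proof.
move=> /connectP[p + ->]; elim: p x => [|z p IH] x /=; first by move=> _ ->.
move=> /andP[/existsP[m /andP[mS j]] pz] cx; case cz: (c z); first exact: IH.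
by exists m; rewrite // (joins_crosses _ j) cx cz.
Qed.

Lemma component_closed (S : {set L}) a m : m \in S ->
  connect (adj S) a (src m) = connect (adj S) a (tgt m).
Proof.
move=> mS; have st : adj S (src m) (tgt m) := adj_joins mS (joins_ends m).
apply/idP/idP => /connect_trans; apply; first exact: connect1.
by rewrite connect_adj_sym connect1.
Qed.

Lemma crosses_oriented (c : pred V) m : crosses c m ->
  exists u w, [/\ joins m u w, c u & ~~ c w].
Proof.
rewrite /crosses => cm; case cs: (c (src m)); move: cm; rewrite cs => ct.
  by exists (src m), (tgt m); rewrite joins_ends cs; case: (c (tgt m)) ct.
by exists (tgt m), (src m); rewrite joins_sym joins_ends cs; case: (c (tgt m)) ct.
Qed.

Lemma is_cycle_subset (S : {set L}) ls : is_cycle S ls -> {subset ls <= S}.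
Proof. by move=> [vs [_ _ _ /allP sub _]]. Qed.

Lemma is_cycle_sub (S S' : {set L}) ls :
  is_cycle S ls -> {subset ls <= S'} -> is_cycle S' ls.
Proof. by move=> [vs [? ? ? _ ?]] sub; exists vs; split=> //; apply/allP. Qed.

Section PathLines.
Variables (S : {set L}) (x0 : L).

Definition line_of (u w : V) : L := odflt x0 [pick m in S | joins m u w].

Lemma line_ofP u w : adj S u w -> (line_of u w \in S) && joins (line_of u w) u w.
Proof.
move=> /existsP[m hm]; rewrite /line_of; case: pickP => [m' /= -> //|/(_ m)].
by rewrite hm.
Qed.

Lemma path_lines_sub a s : path (adj S) a s -> all (mem S) (pairmap line_of a s).
Proof.
elim: s a => //= y s IH a /andP[ay p]; rewrite IH // andbT.
by case/andP: (line_ofP ay).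
Qed.

Lemma path_lines_nth a s i dl dv : path (adj S) a s -> i < size s ->
  joins (nth dl (pairmap line_of a s) i) (nth dv (a :: s) i) (nth dv (a :: s) i.+1).
Proof.
elim: s a i => //= y s IH a [|i] /andP[ay p] lti /=; last exact: IH.
by case/andP: (line_ofP ay).
Qed.

Lemma path_lines_ends a s m : path (adj S) a s -> m \in pairmap line_of a s ->
  (src m \in a :: s) && (tgt m \in a :: s).
Proof.
elim: s a => //= y s IH a /andP[ay p]; rewrite inE => /orP[/eqP->|].
  case/andP: (line_ofP ay) => _ /orP[]/andP[/eqP-> /eqP->];
  by rewrite !inE !eqxx ?orbT.
by move/(IH _ p); rewrite !inE => /andP[-> ->]; rewrite !orbT.
Qed.

Lemma uniq_path_lines a s : path (adj S) a s -> uniq (a :: s) ->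
  uniq (pairmap line_of a s).
Proof.
elim: s a => //= y s IH a /andP[ay p] /andP[na u]; rewrite IH // andbT.
apply/negP => /(path_lines_ends p) /andP[hs ht].
case/andP: (line_ofP ay) => _ /orP[]/andP[/eqP e1 /eqP e2].
- by move: hs; rewrite e1 (negbTE na).
- by move: ht; rewrite e2 (negbTE na).
Qed.

Lemma has_crosses_path_lines a s (c : pred V) : path (adj S) a s ->
  c a != c (last a s) -> has (crosses c) (pairmap line_of a s).
Proof.
elim: s a => /= [|y s IH] a; first by rewrite eqxx.
move=> /andP[ay p] ca; case e: (c a == c y); first by rewrite IH ?orbT // -(eqP e).
by case/andP: (line_ofP ay) => _ j; rewrite (joins_crosses _ j) e.
Qed.

End PathLines.

Lemma closing_cycle (S : {set L}) x p q :
  x \notin S -> joins x p q -> connect (adj S) q p ->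
  exists ls, [/\ is_cycle (S :|: [set x]) (rcons ls x), all (mem S) ls &
                 forall c : pred V, c p != c q -> has (crosses c) ls].
Proof.
move=> xS jx /connectP[s0 ps0 ep]; subst p.
case: (shortenP ps0) jx => s ps us _ jx.
have sub := path_lines_sub x ps.
exists (pairmap (line_of S x) q s); split=> //; last first.
  by move=> c; rewrite eq_sym; apply: has_crosses_path_lines.
exists (q :: s); split.
- by case: (pairmap _ _ _).
- by rewrite size_rcons size_pairmap.
- rewrite us andbT rcons_uniq uniq_path_lines // andbT.
  by apply: contra xS => /(allP sub).
- rewrite all_rcons /= !inE eqxx orbT /=.
  by apply/allP => m /(allP sub) /= mS; rewrite inE mS.
- move=> i dl dv; rewrite size_rcons size_pairmap ltnS leq_eqVlt.
  case/orP => [/eqP ->|lti].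
    rewrite nth_rcons size_pairmap ltnn eqxx modnn /=.
    by rewrite (set_nth_default q) //= -last_nth.
  by rewrite nth_rcons size_pairmap lti modn_small //; exact: path_lines_nth.
Qed.

Lemma is_cycle_crosses_twice (S : {set L}) ls (c : pred V) m :
  is_cycle S ls -> m \in ls -> crosses c m ->
  exists2 m', m' \in ls & (m' != m) && crosses c m'.
Proof.
move=> [vs [_ sz /andP[uls _] _ J]] mls.
case: (boolP (has (fun m' => (m' != m) && crosses c m') ls)) => [/hasP[m'] | /hasPn none].
  by exists m'.
(* If m were the only crossing line, c would be constant along the cycle at
   every step but m's, hence also across m. *)
set k := index m ls; have kl : k < size ls by rewrite index_mem.
have Jk := J k m (src m) kl; rewrite nth_index // in Jk.
rewrite (joins_crosses _ Jk) => /eqP[].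
apply: (@cyclic_step_eq _ (fun i => c (nth (src m) vs i))) => // i il ik.
have mi : nth m ls i != m by rewrite -{2}(nth_index m mls) nth_uniq.
apply/eqP; rewrite -(negbK (_ == _)) -(joins_crosses _ (J i m (src m) il)).
by have := none _ (mem_nth m il); rewrite mi.
Qed.

Lemma uniq_joins_index (vs : seq V) dv m i j : uniq vs ->
  i.+1 < size vs -> j.+1 < size vs ->
  joins m (nth dv vs i) (nth dv vs i.+1) -> joins m (nth dv vs j) (nth dv vs j.+1) ->
  i = j.
Proof.
move=> u hi hj.
have E p q : p < size vs -> q < size vs -> nth dv vs p = nth dv vs q -> p = q.
  by move=> hp hq e; apply/eqP; rewrite -(nth_uniq dv hp hq u) e.
move=> /orP[]/andP[/eqP e1 /eqP e2] /orP[]/andP[/eqP e3 /eqP e4].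
- by apply: E; [lia | lia | rewrite -e1 -e3].
- have := E i j.+1 ltac:(lia) ltac:(lia) (etrans (esym e1) e3).
  have := E i.+1 j ltac:(lia) ltac:(lia) (etrans (esym e2) e4); lia.
- have := E i.+1 j ltac:(lia) ltac:(lia) (etrans (esym e1) e3).
  have := E i j.+1 ltac:(lia) ltac:(lia) (etrans (esym e2) e4); lia.
- by apply: E; [lia | lia | rewrite -e2 -e4].
Qed.

Lemma is_path_split (S : {set L}) x y ls m : is_path S x y ls -> m \in ls ->
  exists u w, [/\ joins m u w, connect (adj (S :\ m)) x u & connect (adj (S :\ m)) w y].
Proof.
move=> [vs [sz [hd lt] uv allS J]] mls.
set k := index m ls; have kl : k < size ls by rewrite index_mem.
have Jk : joins m (nth x vs k) (nth x vs k.+1) by have := J k m kl; rewrite nth_index.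
have step h : h < size ls -> h != k -> adj (S :\ m) (nth x vs h) (nth x vs h.+1).
  move=> hl hk; apply: (@adj_joins _ (nth m ls h)); last exact: J.
  rewrite !inE (allP allS _ (mem_nth m hl)) andbT.
  apply: contra hk => /eqP e; apply/eqP/(uniq_joins_index uv); [lia | lia | | exact: Jk].
  by rewrite -{1}e; apply: J.
exists (nth x vs k), (nth x vs k.+1); split=> //.
- rewrite -[X in connect _ X _]hd -nth0.
  by apply: connect_nth => // h /andP[_ hk]; apply: step; lia.
- have -> : y = nth x vs (size ls) by rewrite -lt -nth_last sz.
  by apply: connect_nth => // h /andP[kh hl]; apply: step; lia.
Qed.

Section TreeExchange.
Variables (T : {set L}) (l : L) (a b : V).
Hypotheses (treeT : spanning_tree T) (lT : l \in T) (jl : joins l a b).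
Local Notation side := (connect (adj (T :\ l)) a).

Lemma tree_cut_disconnected : ~~ connect (adj (T :\ l)) a b.
Proof.
apply/negP => ab; have lnT : l \notin T :\ l by rewrite !inE eqxx.
have [ls [cyc _ _]] := closing_cycle lnT jl (etrans (connect_adj_sym _ _ _) ab).
by apply: (treeT.2 (rcons ls l)); rewrite setUC setD1K in cyc.
Qed.

Lemma tree_cut_cover z : side z || connect (adj (T :\ l)) b z.
Proof.
(* The union of both sides contains a, and no line of T leaves it. *)
apply/negPn/negP => out.
pose c v := side v || connect (adj (T :\ l)) b v.
have [m mT] := @connect_crosses _ c _ _ (treeT.1 a z) ltac:(by rewrite /c connect0) out.
case: (eqVneq m l) => [->|ml]; first by rewrite (joins_crosses _ jl) /c !connect0 orbT.
have mTl : m \in T :\ l by rewrite !inE ml.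
by rewrite /crosses /c !(component_closed _ mTl) eqxx.
Qed.

Lemma exchange_notin_tree m : crosses side m -> m != l -> m \notin T.
Proof.
move=> cm ml; apply/negP => mT.
by move: cm; rewrite /crosses component_closed ?eqxx // !inE ml mT.
Qed.

Lemma exchange_on_loop m : crosses side m -> m != l -> on_loop T m l.
Proof.
move=> cm ml; have [u [w [jm su sw]]] := crosses_oriented cm.
have [ls [cyc sub hc]] := closing_cycle (exchange_notin_tree cm ml) jm (treeT.1 w u).
exists (rcons ls m); split=> //; first by rewrite mem_rcons mem_head.
have /hasP[y yls cy] := hc side ltac:(by rewrite su (negbTE sw)).
have yl := contraTeq (exchange_notin_tree cy) (allP sub _ yls).
by rewrite mem_rcons inE -yl yls orbT.
Qed.

Lemma exchange_spanning_tree m : crosses side m -> m != l ->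
  spanning_tree ((T :\ l) :|: [set m]).
Proof.
move=> cm ml; have [u [w [jm su sw]]] := crosses_oriented cm.
have sub : T :\ l \subset (T :\ l) :|: [set m] := subsetUl _ _.
split.
  have wb : connect (adj (T :\ l)) w b.
    by rewrite connect_adj_sym; have := tree_cut_cover w; rewrite (negbTE sw).
  have ab : connect (adj ((T :\ l) :|: [set m])) a b.
    apply: connect_trans (connect_adjS sub su) (connect_trans _ (connect_adjS sub wb)).
    by apply/connect1/(adj_joins _ jm); rewrite !inE eqxx orbT.
  have az z : connect (adj ((T :\ l) :|: [set m])) a z.
    case/orP: (tree_cut_cover z) => [|/(connect_adjS sub)]; first exact: connect_adjS.
    exact: connect_trans ab.
  by move=> z1 z2; apply: connect_trans (az z2); rewrite connect_adj_sym.
move=> ls cyc; have lsT := is_cycle_subset cyc.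
case: (boolP (m \in ls)) => mls.
  have [m' m'ls /andP[m'm cm']] := is_cycle_crosses_twice cyc mls cm.
  have m'T : m' \in T :\ l by move: (lsT _ m'ls); rewrite !inE (negbTE m'm) orbF.
  by move: cm'; rewrite /crosses (component_closed a m'T) eqxx.
apply: (treeT.2 ls); apply: is_cycle_sub cyc _ => y yls.
move: (lsT _ yls); rewrite !inE => /orP[/andP[_ //] | /eqP ym].
by rewrite -ym yls in mls.
Qed.

End TreeExchange.

Lemma sum_card_fibres (f : L -> V) (c : pred V) :
  \sum_(v | c v) #|[set y | f y == v]| = #|[set y | c (f y)]|.
Proof.
rewrite -sum1dep_card (partition_big f c) //; apply: eq_bigr => v cv.
rewrite -sum1dep_card; apply: eq_bigl => y.
by case: eqP => [->|]; rewrite ?cv ?andbF.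
Qed.

Lemma sum_eq_indicator (c : pred V) x : \sum_(v | c v) (v == x : nat) = c x.
Proof.
case cx: (c x); last by rewrite big1 // => v cv; case: eqP cv cx => // -> ->.
by rewrite (bigD1 x) //= eqxx big1 // => v /andP[_ /negbTE ->].
Qed.

Lemma odd_card_set (P : pred L) : odd #|[set y | P y]| = \big[addb/false]_y P y.
Proof.
rewrite -sum1dep_card big_mkcond (big_morph odd oddD (erefl : odd 0 = false)).
by apply: eq_bigr => y _; case: (P y).
Qed.

Section Parity.
Variables v1 v2 : V.

Lemma odd_card_crosses (c : pred V) :
  odd #|[set m | crosses c m]| =
    odd (\sum_(v | c v) incidence src tgt v1 v2 v) (+) c v1 (+) c v2.
Proof.
rewrite /incidence !big_split /= !sum_card_fibres !sum_eq_indicator !oddD !oddb.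
have -> : odd #|[set m | crosses c m]| =
          odd #|[set y | c (src y)]| (+) odd #|[set y | c (tgt y)]|.
  by rewrite !odd_card_set -big_split; apply: eq_bigr => y _; rewrite /crosses negb_eqb.
by case: (c v1); case: (c v2); rewrite /= ?addbT ?addbF ?negbK.
Qed.

Lemma even_incidence_odd_cut (c : pred V) :
  (forall v, ~~ odd (incidence src tgt v1 v2 v)) -> c v1 -> ~~ c v2 ->
  odd #|[set m | crosses c m]|.
Proof.
move=> even cv1 /negbTE cv2; rewrite odd_card_crosses cv1 cv2 addbT addbF.
by apply: (big_ind (fun n => ~~ odd n)) => // x y ex ey; rewrite oddD (negbTE ex).
Qed.

End Parity.

End Graph.


Theorem lemma7 (V L : finType) (src tgt : L -> V) (v1 v2 : V) :
  v1 != v2 ->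
  one_PI src tgt ->
  (forall v : V, ~~ odd (incidence src tgt v1 v2 v)) ->
  forall T : {set L}, spanning_tree src tgt T ->
  forall l : L, (exists theta, is_path src tgt T v1 v2 theta /\ l \in theta) ->
  exists l1 l2 : L,
    [/\ l1 != l2, (l1 \notin T) && (l2 \notin T),
        on_loop src tgt T l1 l /\ on_loop src tgt T l2 l,
        spanning_tree src tgt ((T :\ l) :|: [set l1]) &
        spanning_tree src tgt ((T :\ l) :|: [set l2])].
Proof.
(* v1 != v2 is already forced by l lying on a path from v1 to v2. *)
move=> _ [_ cut_connected] even T treeT l [theta [theta_path l_theta]].
have lT : l \in T by case: theta_path => vs [_ _ _ /allP allT _]; exact: allT.
have [a [b [jl v1a bv2]]] := is_path_split theta_path l_theta.
have nab := tree_cut_disconnected treeT lT jl.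
set side := connect (adj src tgt (T :\ l)) a.
set C := [set m | crosses src tgt side m].
have lC : l \in C by rewrite inE (joins_crosses _ jl) /side connect0 (negbTE nab).
have oddC : odd #|C|.
  apply: even_incidence_odd_cut even _ _; first by rewrite /side connect_adj_sym.
  by apply: contra nab => /connect_trans; apply; rewrite connect_adj_sym.
have [l' l'T cl'] := connect_crosses (cut_connected l a b) (connect0 _ a) nab.
have : 1 < #|C :\ l|.
  have : 0 < #|C :\ l|.
    by apply/card_gt0P; exists l'; move: l'T; rewrite !inE cl' !andbT.
  by move: oddC; rewrite (cardsD1 l) lC; case: #|C :\ l| => [|[]].
case/card_gt1P => l1 [l2 [+ + l12]]; rewrite !inE => /andP[l1l c1] /andP[l2l c2].
exists l1, l2; split=> //.
- by rewrite (exchange_notin_tree c1 l1l) (exchange_notin_tree c2 l2l).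
- by split; apply: (exchange_on_loop (a := a) treeT).
- exact: (exchange_spanning_tree (a := a) treeT jl).
- exact: (exchange_spanning_tree (a := a) treeT jl).
Qed.
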